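(* Let $G$ be a finite simple graph with $n$ vertices and minimum degree $\delta$, and let $k$ be a positive integer. Then $\gamma_{gr}^{L,k}(G) \leq n-\delta+k$.
   Context: For a vertex $v$, $N(v)$ denotes its open neighborhood and $N[v]=N(v)\cup\{v\}$ its closed neighborhood. A sequence $S=(v_1,\ldots,v_m)$ of distinct vertices of $G$ is a $k$-$L$-sequence if for each $i\in[m]$ there exists a vertex $u_i\in N[v_i]$ such that the number of indices $j<i$ with $u_i\in N(v_j)$ is less than $k$. The $k$-$L$-Grundy domination number $\gamma_{gr}^{L,k}(G)$ is the maximum length of a $k$-$L$-sequence of $G$. *)

From mathcomp Require Import all_boot.
Set Implicit Arguments. Unset Strict Implicit. Unset Printing Implicit Defensive.

Definition simple_graph (T : finType) (e : rel T) : Prop :=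
  symmetric e /\ irreflexive e.

Definition opn (T : finType) (e : rel T) (v : T) : {set T} := [set u | e v u].
Definition cln (T : finType) (e : rel T) (v : T) : {set T} := v |: opn e v.

Definition deg (T : finType) (e : rel T) (v : T) : nat := #|opn e v|.

(* s = (v_1,...,v_m) is a k-L-sequence: its vertices are distinct, and for
   every position, writing s = s1 ++ v :: s2 (so s1 = (v_1,...,v_{i-1}) and
   v = v_i), there is u in N[v] such that the number of earlier vertices v_j
   (j < i) with u in N(v_j) is less than k. *)
Definition kL_sequence (T : finType) (e : rel T) (k : nat) (s : seq T) : Prop :=
  uniq s /\
  forall (s1 : seq T) (v : T) (s2 : seq T), s = s1 ++ v :: s2 ->
    exists2 u, u \in cln e v & count (fun w => u \in opn e w) s1 < k.

From mathcomp Require Import all_boot.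
From mathcomp Require Import zify.

Set Implicit Arguments.
Unset Strict Implicit.
Unset Printing Implicit Defensive.

(* Let s = s1 ++ v :: s2 be a k-L-sequence and u the vertex of N[v] witnessing
   position v.  Since s1 has distinct vertices, at most n - deg u of them lie
   outside N(u), so at least |s1| - (n - delta) of them are neighbours of u;
   this count is < k, hence |s1| < n - delta + k.  Applied to the last vertex
   of s this gives |s| <= n - delta + k. *)

Lemma count_leq_card (T : finType) (A : {pred T}) (s : seq T) :
  uniq s -> count [in A] s <= #|A|.
Proof.
move=> us; rewrite -size_filter -(card_uniqP (filter_uniq _ us)).
by apply: subset_leq_card; apply/subsetP => w; rewrite mem_filter => /andP[].
Qed.

Lemma uniq_size_leq_count (T : finType) (A : {pred T}) (s : seq T) :
  uniq s -> size s <= count [in A] s + #|[predC A]|.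
Proof.
move=> us; rewrite -(count_predC [in A] s) leq_add2l.
have -> : count (predC [in A]) s = count [in [predC A]] s by apply: eq_count.
exact: count_leq_card.
Qed.

Section KLSequence.

Variables (T : finType) (e : rel T).
Hypothesis e_sym : symmetric e.

Lemma count_adjacent (u : T) (s : seq T) :
  count (fun w => u \in opn e w) s = count [in opn e u] s.
Proof. by apply: eq_count => w; rewrite !inE e_sym. Qed.

Lemma uniq_size_leq_count_adjacent (u : T) (s : seq T) :
  uniq s -> size s <= count (fun w => u \in opn e w) s + (#|T| - deg e u).
Proof.
move=> us; rewrite count_adjacent /deg.
have := cardC (opn e u); have := uniq_size_leq_count (opn e u) us; lia.
Qed.

Lemma kL_sequence_prefix_size (k delta : nat) (s1 s2 : seq T) (v : T) :
  (forall w : T, delta <= deg e w) ->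
  kL_sequence e k (s1 ++ v :: s2) -> size s1 < #|T| - delta + k.
Proof.
move=> min_deg [us kL]; have [u _ count_lt] := kL s1 v s2 erefl.
have us1 : uniq s1 by move: us; rewrite cat_uniq => /and3P[].
have := uniq_size_leq_count_adjacent u us1.
have := min_deg u; have := max_card (opn e u); rewrite /deg; lia.
Qed.

End KLSequence.

Theorem mainTheorem1 (T : finType) (e : rel T) (k delta : nat) :
  simple_graph e ->
  0 < k ->
  (forall v : T, delta <= deg e v) ->
  (exists v : T, deg e v = delta) ->
  forall s : seq T, kL_sequence e k s -> size s <= #|T| - delta + k.
Proof.
move=> [e_sym _] _ min_deg _ s; case/lastP: s => [//|s v].
rewrite -cats1 size_cat addn1 => kL.
exact: (kL_sequence_prefix_size e_sym min_deg kL).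
Qed.
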